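(* Let $B_{\mathrm{unl}}(x,y)=\sum_{i,j\ge0}b_{i,j}x^iy^j$, where $b_{i,j}$ is the number of isomorphism classes of bicoloured graphs with $i$ vertices in the first colour class and $j$ in the second, and let $T_{\mathrm{unl}}(x,y)=\sum_{i,j\ge0}\tau_{i,j}x^iy^j$, where $\tau_{i,j}$ is the number of isomorphism classes of tangles with $i$ vertices in the first colour class and $j$ in the second. Then \[T_{\mathrm{unl}}(x,y)=1-x-y-B_{\mathrm{unl}}(x,y)^{-1}.\]
   Context: A bicoloured graph is a triple $G=(V_1,V_2,E)$ with $V_1,V_2$ disjoint finite sets (ordered colour classes) and $E\subseteq V_1\times V_2$; isomorphisms are graph isomorphisms mapping $V_1$ to $V_1$ and $V_2$ to $V_2$. For a vertex $u$ let $N(u)$ be its set of neighbours. $G$ is called a tangle if $|V_1|\ge2$, $|V_2|\ge2$, the graph on $V_2$ joining $a,b$ whenever neither of $N(a),N(b)$ contains the other is connected, and the graph on $V_1$ defined by the same rule is connected. (Equivalently, viewing $G$ as the poset on $V_1\cup V_2$ with $u<w$ iff $u\in V_1,w\in V_2$, $(u,w)\in E$, the whole poset is a single tangle, i.e. a component of $(2+2)$-connectedness with top $V_2$ and bottom $V_1$.) *)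

From HB Require Import structures.
From mathcomp Require Import all_boot all_order all_algebra.
From mathcomp Require Import all_fingroup.
Set Implicit Arguments. Unset Strict Implicit. Unset Printing Implicit Defensive.
Import GRing.Theory Num.Theory.

(* A bicoloured graph with i vertices in the first colour class V1 = 'I_i and
   j vertices in the second colour class V2 = 'I_j is an edge set E ⊆ V1 × V2. *)
Definition bigraph (i j : nat) := {set 'I_i * 'I_j}.

Definition bi_iso (i j : nat) (G H : bigraph i j) : bool :=
  [exists s : {perm 'I_i}, exists t : {perm 'I_j},
     [forall u : 'I_i, forall w : 'I_j, ((u, w) \in G) == ((s u, t w) \in H)]].

Definition nbr1 (i j : nat) (G : bigraph i j) (u : 'I_i) : {set 'I_j} :=
  [set w | (u, w) \in G].
Definition nbr2 (i j : nat) (G : bigraph i j) (w : 'I_j) : {set 'I_i} :=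
  [set u | (u, w) \in G].

Definition incomp_rel (T U : finType) (N : T -> {set U}) : rel T :=
  fun a b => ~~ (N a \subset N b) && ~~ (N b \subset N a).

Definition connected_rel (T : finType) (r : rel T) : bool :=
  [forall a : T, forall b : T, connect r a b].

Definition is_tangle (i j : nat) (G : bigraph i j) : bool :=
  [&& 2 <= i, 2 <= j,
      connected_rel (incomp_rel (nbr2 G)) & connected_rel (incomp_rel (nbr1 G))].

Definition iso_class (i j : nat) (G : bigraph i j) : {set bigraph i j} :=
  [set H | bi_iso G H].

Definition b_unl (i j : nat) : nat :=
  #|[set iso_class G | G : bigraph i j]|.

Definition tau_unl (i j : nat) : nat :=
  #|[set iso_class G | G : bigraph i j & is_tangle G]|.

Definition fps2 := nat -> nat -> int.

Definition fps_mul (f g : fps2) : fps2 := fun m n =>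
  (\sum_(k < m.+1) \sum_(l < n.+1) f k l * g (m - k)%N (n - l)%N)%R.

Definition fps_one : fps2 := fun m n => if (m == 0%N) && (n == 0%N) then 1%R else 0%R.
Definition fps_x : fps2 := fun m n => if (m == 1%N) && (n == 0%N) then 1%R else 0%R.
Definition fps_y : fps2 := fun m n => if (m == 0%N) && (n == 1%N) then 1%R else 0%R.
Definition fps_sub (f g : fps2) : fps2 := fun m n => (f m n - g m n)%R.

Definition fps_eq (f g : fps2) : Prop := forall m n, f m n = g m n.

Definition B_unl : fps2 := fun m n => Posz (b_unl m n).
Definition T_unl : fps2 := fun m n => Posz (tau_unl m n).

From HB Require Import structures.
From mathcomp Require Import all_boot all_order all_algebra all_fingroup.
From mathcomp Require Import zify ring.
Set Implicit Arguments. Unset Strict Implicit. Unset Printing Implicit Defensive.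

(* (P1, P2) is a prefix of G when every vertex of P1 is joined to every vertex
   of V2 \ P2 and no vertex of V1 \ P1 to a vertex of P2: G is then the
   concatenation of its restriction to P1 u P2 followed by the rest. G is
   indecomposable when it is nonempty and has only the trivial prefixes.
   A nonempty G has a minimal nonempty prefix, which is unique unless it is one
   of several universal vertices of V1 (or isolated vertices of V2), and those
   are swapped by automorphisms of G. Hence every nonempty G is, up to
   isomorphism, a concatenation of an indecomposable A and an arbitrary R, and
   the classes of A and R are determined by G: B = 1 + I B, where I counts the
   indecomposable graphs, so B^-1 = 1 - I. Finally, the indecomposable graphs
   are the two one-vertex graphs and the tangles. *)

Section NatAdjacency.
Variables i j : nat.

(* Adjacency on nat indices (false out of range), so that graphs of different
   sizes and index shifts can be compared without casts. *)
Definition adj (G : bigraph i j) (a b : nat) : bool :=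
  if (insub a : option 'I_i, insub b : option 'I_j) is (Some u, Some w)
  then (u, w) \in G else false.

Lemma adj_val G (u : 'I_i) (w : 'I_j) : adj G u w = ((u, w) \in G).
Proof. by rewrite /adj !valK. Qed.

Lemma adj_ord G a b (ha : a < i) (hb : b < j) :
  adj G a b = ((Ordinal ha, Ordinal hb) \in G).
Proof. by rewrite -adj_val. Qed.

Lemma bigraph_ext (G H : bigraph i j) :
  (forall a b, a < i -> b < j -> adj G a b = adj H a b) -> G = H.
Proof. by move=> eGH; apply/setP => -[u w]; rewrite -!adj_val; apply: eGH. Qed.

Definition nat_bij (n : nat) (p q : nat -> nat) :=
  forall a, a < n -> [/\ p a < n, q a < n, q (p a) = a & p (q a) = a].

Definition nat_iso (G H : bigraph i j) := exists p1 q1 p2 q2,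
  [/\ nat_bij i p1 q1, nat_bij j p2 q2 &
      forall a b, a < i -> b < j -> adj G a b = adj H (p1 a) (p2 b)].

Lemma bi_isoE (G H : bigraph i j) :
  bi_iso G H <-> exists (s : {perm 'I_i}) (t : {perm 'I_j}),
     forall u w, ((u, w) \in G) = ((s u, t w) \in H).
Proof.
split=> [/existsP[s /existsP[t /forallP stE]]|[s [t stE]]].
  by exists s, t => u w; apply/eqP; move/forallP: (stE u); apply.
apply/existsP; exists s; apply/existsP; exists t.
by apply/forallP => u; apply/forallP => w; rewrite stE.
Qed.

End NatAdjacency.

Definition nat_perm n (s : {perm 'I_n}) (a : nat) : nat :=
  if (insub a : option 'I_n) is Some u then val (s u) else a.

Lemma nat_perm_val n (s : {perm 'I_n}) (u : 'I_n) : nat_perm s u = s u.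
Proof. by rewrite /nat_perm valK. Qed.

Lemma nat_bij_perm n (s : {perm 'I_n}) : nat_bij n (nat_perm s) (nat_perm s^-1).
Proof.
move=> a ha; have -> : a = Ordinal ha by [].
by rewrite !nat_perm_val permK permKV; split.
Qed.

Lemma nat_bij_ex_perm n p q : nat_bij n p q ->
  exists s : {perm 'I_n}, forall u : 'I_n, val (s u) = p u.
Proof.
move=> pq; have sE (u : 'I_n) : val (insubd u (p u)) = p u.
  by rewrite val_insubd; case: (pq u (ltn_ord u)) => ->.
have s_inj : injective (fun u : 'I_n => insubd u (p u)).
  move=> u v /(congr1 val); rewrite !sE => puv; apply: ord_inj.
  have [_ _ qpu _] := pq u (ltn_ord u); have [_ _ qpv _] := pq v (ltn_ord v).
  by rewrite -qpu -qpv puv.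
by exists (perm s_inj) => u; rewrite permE sE.
Qed.

Section Isomorphism.
Variables i j : nat.
Implicit Types G H K : bigraph i j.

Lemma bi_isoP G H : bi_iso G H <-> nat_iso G H.
Proof.
rewrite bi_isoE; split=> [[s [t stE]]|[p1 [q1 [p2 [q2 [pq1 pq2 pE]]]]]].
  exists (nat_perm s), (nat_perm s^-1), (nat_perm t), (nat_perm t^-1).
  split; try exact: nat_bij_perm.
  move=> a b ha hb; have := stE (Ordinal ha) (Ordinal hb).
  by rewrite -!adj_val -!nat_perm_val.
have [s sE] := nat_bij_ex_perm pq1; have [t tE] := nat_bij_ex_perm pq2.
by exists s, t => u w; rewrite -!adj_val pE ?ltn_ord // sE tE.
Qed.

Lemma bi_iso_refl G : bi_iso G G.
Proof. by apply/bi_isoE; exists 1%g, 1%g => u w; rewrite !perm1. Qed.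

Lemma bi_iso_sym G H : bi_iso G H -> bi_iso H G.
Proof.
move/bi_isoE=> [s [t stE]]; apply/bi_isoE; exists s^-1%g, t^-1%g => u w.
by rewrite stE !permKV.
Qed.

Lemma bi_iso_trans G H K : bi_iso G H -> bi_iso H K -> bi_iso G K.
Proof.
move/bi_isoE=> [s [t stE]] /bi_isoE [s' [t' stE']]; apply/bi_isoE.
by exists (s * s')%g, (t * t')%g => u w; rewrite stE stE' !permM.
Qed.

Lemma iso_classE G H : iso_class G = iso_class H <-> bi_iso G H.
Proof.
split=> [eGH|GH].
  have : H \in iso_class H by rewrite inE bi_iso_refl.
  by rewrite -eGH inE.
apply/setP => K; rewrite !inE; apply/idP/idP => hK.
  exact: bi_iso_trans (bi_iso_sym GH) hK.
exact: bi_iso_trans GH hK.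
Qed.
End Isomorphism.

Definition prefix m n (G : bigraph m n) (P1 : {set 'I_m}) (P2 : {set 'I_n}) : bool :=
  [forall u, forall w, ((u \in P1) && (w \notin P2) ==> ((u, w) \in G)) &&
                       ((w \in P2) && (u \notin P1) ==> ((u, w) \notin G))].

Lemma prefixP m n (G : bigraph m n) (P1 : {set 'I_m}) (P2 : {set 'I_n}) :
  reflect ((forall u w, u \in P1 -> w \notin P2 -> (u, w) \in G) /\
           (forall u w, w \in P2 -> u \notin P1 -> (u, w) \notin G))
          (prefix G P1 P2).
Proof.
apply: (iffP forallP) => [Gpre|[Gin Gout] u].
  split=> u w h1 h2; have /andP[e1 e2] := forallP (Gpre u) w.
    by apply: (implyP e1); rewrite h1 h2.
  by apply: (implyP e2); rewrite h1 h2.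
apply/forallP => w; apply/andP.
by split; apply/implyP => /andP[h1 h2]; [apply: Gin|apply: Gout].
Qed.

Definition lowset m k : {set 'I_m} := [set u : 'I_m | u < k].

Section Concatenation.
Variables (m n k l : nat).

Definition bcat_adj (A : bigraph k l) (R : bigraph (m - k) (n - l)) (a b : nat) :=
  if a < k then (if b < l then adj A a b else true)
  else (if b < l then false else adj R (a - k) (b - l)).

Definition bcat (A : bigraph k l) (R : bigraph (m - k) (n - l)) : bigraph m n :=
  [set p : 'I_m * 'I_n | bcat_adj A R p.1 p.2].

Definition bhead (G : bigraph m n) : bigraph k l :=
  [set p : 'I_k * 'I_l | adj G p.1 p.2].

Definition btail (G : bigraph m n) : bigraph (m - k) (n - l) :=
  [set p : 'I_(m - k) * 'I_(n - l) | adj G (p.1 + k) (p.2 + l)].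

Lemma adj_bcat A R a b : a < m -> b < n -> adj (bcat A R) a b = bcat_adj A R a b.
Proof. by move=> ha hb; rewrite adj_ord inE. Qed.

Lemma adj_bhead G a b : a < k -> b < l -> adj (bhead G) a b = adj G a b.
Proof. by move=> ha hb; rewrite adj_ord inE. Qed.

Lemma adj_btail G a b : a < m - k -> b < n - l ->
  adj (btail G) a b = adj G (a + k) (b + l).
Proof. by move=> ha hb; rewrite adj_ord inE. Qed.

Lemma prefix_bcat A R : prefix (bcat A R) (lowset m k) (lowset n l).
Proof. by apply/prefixP; split=> u w; rewrite !inE /bcat_adj /= => -> /negbTE ->. Qed.

Lemma bcat_head_tail G : k <= m -> l <= n ->
  prefix G (lowset m k) (lowset n l) -> G = bcat (bhead G) (btail G).
Proof.
move=> hk hl /prefixP[Gin Gout]; apply: bigraph_ext => a b ha hb.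
rewrite adj_bcat // /bcat_adj; case: ltnP => ak; case: ltnP => bl.
- by rewrite adj_bhead.
- by rewrite adj_ord; apply: Gin; rewrite inE /= -?leqNgt.
- by rewrite adj_ord; apply/negbTE/Gout; rewrite inE /= -?leqNgt.
- by rewrite adj_btail ?subnK //; lia.
Qed.

End Concatenation.

Definition nat_sum k (p1 p2 : nat -> nat) (a : nat) :=
  if a < k then p1 a else p2 (a - k) + k.

Lemma nat_bij_sum m k p1 q1 p2 q2 : k <= m -> nat_bij k p1 q1 ->
  nat_bij (m - k) p2 q2 -> nat_bij m (nat_sum k p1 p2) (nat_sum k q1 q2).
Proof.
move=> hk pq1 pq2 a ha; rewrite /nat_sum; case: ifP => ak.
  by have [x1 x2 x3 x4] := pq1 a ak; rewrite x1 x2 x3 x4; split=> //; lia.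
have [|x1 x2 x3 x4] := pq2 (a - k); first lia.
rewrite ifF; last lia. rewrite ifF; last lia.
by rewrite !addnK x3 x4; split; lia.
Qed.

Lemma bcat_iso m n k l (A A' : bigraph k l) (R R' : bigraph (m - k) (n - l)) :
  k <= m -> l <= n -> bi_iso A A' -> bi_iso R R' -> bi_iso (bcat A R) (bcat A' R').
Proof.
move=> hk hl /bi_isoP[p1 [q1 [p2 [q2 [pq1 pq2 AE]]]]].
move=> /bi_isoP[r1 [s1 [r2 [s2 [rs1 rs2 RE]]]]].
apply/bi_isoP; exists (nat_sum k p1 r1), (nat_sum k q1 s1),
                      (nat_sum l p2 r2), (nat_sum l q2 s2).
split; try exact: nat_bij_sum.
move=> a b ha hb.
have [ha' _ _ _] := nat_bij_sum hk pq1 rs1 ha.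
have [hb' _ _ _] := nat_bij_sum hl pq2 rs2 hb.
rewrite !adj_bcat // /bcat_adj /nat_sum; case: ifP => ak; case: ifP => bl.
- by have [-> _ _ _] := pq1 a ak; have [-> _ _ _] := pq2 b bl; apply: AE.
- by have [-> _ _ _] := pq1 a ak; rewrite ifF //; lia.
- by rewrite ifF; [have [-> _ _ _] := pq2 b bl | lia].
- by rewrite ifF; [rewrite ifF; [rewrite !addnK; apply: RE|]|]; lia.
Qed.

Section BijectionSplit.
Variables (m k : nat) (p q : nat -> nat).
Hypotheses (hk : k <= m) (pq : nat_bij m p q).
Hypothesis p_low : forall a, a < m -> (p a < k) = (a < k).

Lemma nat_bij_inv_low a : a < m -> (q a < k) = (a < k).
Proof. by move=> ha; have [_ hq _ pqa] := pq ha; rewrite -{2}pqa p_low. Qed.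

Lemma nat_bij_low : nat_bij k p q.
Proof.
move=> a ak; have am : a < m by lia.
have [x1 x2 x3 x4] := pq am.
by split=> //; rewrite ?p_low ?nat_bij_inv_low.
Qed.

Lemma nat_bij_high :
  nat_bij (m - k) (fun a => p (a + k) - k) (fun a => q (a + k) - k).
Proof.
move=> a ha; have am : a + k < m by lia.
have [x1 x2 x3 x4] := pq am.
have y1 : k <= p (a + k) by rewrite leqNgt p_low //; lia.
have y2 : k <= q (a + k) by rewrite leqNgt nat_bij_inv_low //; lia.
by rewrite !subnK // x3 x4 !addnK; split=> //; lia.
Qed.

End BijectionSplit.

Lemma bcat_iso_inv m n k l (A A' : bigraph k l) (R R' : bigraph (m - k) (n - l))
    (s : {perm 'I_m}) (t : {perm 'I_n}) :
  k <= m -> l <= n ->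
  (forall u w, ((u, w) \in bcat A R) = ((s u, t w) \in bcat A' R')) ->
  s @: lowset m k = lowset m k -> t @: lowset n l = lowset n l ->
  bi_iso A A' /\ bi_iso R R'.
Proof.
move=> hk hl stE sk tl.
have pE a b : a < m -> b < n ->
    bcat_adj A R a b = bcat_adj A' R' (nat_perm s a) (nat_perm t b).
  move=> ha hb; have [hsa _ _ _] := nat_bij_perm s ha.
  have [htb _ _ _] := nat_bij_perm t hb.
  rewrite -!adj_bcat // adj_ord (adj_ord _ hsa htb).
  move: (stE (Ordinal ha) (Ordinal hb)).
  by rewrite -!adj_val -!nat_perm_val !adj_ord.
have s_low a : a < m -> (nat_perm s a < k) = (a < k).
  move=> ha; have := mem_imset (mem (lowset m k)) (Ordinal ha) (@perm_inj _ s).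
  by rewrite sk !inE -nat_perm_val.
have t_low b : b < n -> (nat_perm t b < l) = (b < l).
  move=> hb; have := mem_imset (mem (lowset n l)) (Ordinal hb) (@perm_inj _ t).
  by rewrite tl !inE -nat_perm_val.
have [bs bt] := (nat_bij_perm s, nat_bij_perm t).
split; apply/bi_isoP.
  exists (nat_perm s), (nat_perm s^-1), (nat_perm t), (nat_perm t^-1).
  split; [exact: nat_bij_low bs s_low|exact: nat_bij_low bt t_low|].
  move=> a b ha hb; have := pE a b (leq_trans ha hk) (leq_trans hb hl).
  by rewrite /bcat_adj ha hb s_low ?t_low ?ha ?hb //; lia.
exists (fun a => nat_perm s (a + k) - k), (fun a => nat_perm s^-1 (a + k) - k),
       (fun a => nat_perm t (a + l) - l), (fun a => nat_perm t^-1 (a + l) - l).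
split; [exact: nat_bij_high hk bs s_low|exact: nat_bij_high hl bt t_low|].
move=> a b ha hb; have am : a + k < m by lia. have bn : b + l < n by lia.
have := pE _ _ am bn; have := s_low _ am; have := t_low _ bn.
by rewrite /bcat_adj !ltnNge !leq_addl /= !addnK => -> ->.
Qed.

Section PermImage.
Variable T : finType.
Implicit Types (s t : {perm T}) (A : {set T}).
Local Open Scope group_scope.

Lemma imset_permK s A : s @: (s^-1 @: A) = A.
Proof.
by apply/setP => x; rewrite -{1}[x](permKV s) !(mem_imset _ _ (@perm_inj _ _)).
Qed.

Lemma imset_permT s : s @: [set: T] = [set: T].
Proof. by apply/eqP; rewrite eqEcard subsetT card_imset ?leqnn //; apply: perm_inj. Qed.

Lemma imset_permM s t A :
  (s * t) @: A = t @: (s @: A).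
Proof. by rewrite -imset_comp; apply: eq_imset => x; rewrite permM. Qed.

End PermImage.

Section Prefixes.
Variables m n : nat.
Implicit Types G H : bigraph m n.
Local Open Scope group_scope.

Lemma relabel_inv G H (s : {perm 'I_m}) (t : {perm 'I_n}) :
  (forall u w, ((u, w) \in G) = ((s u, t w) \in H)) ->
  (forall u w, ((u, w) \in H) = ((s^-1 u, t^-1 w) \in G)).
Proof. by move=> stE u w; rewrite stE !permKV. Qed.

Lemma prefix_iso G H (s : {perm 'I_m}) (t : {perm 'I_n}) P1 P2 :
  (forall u w, ((u, w) \in G) = ((s u, t w) \in H)) ->
  prefix G P1 P2 -> prefix H (s @: P1) (t @: P2).
Proof.
move=> stE /prefixP[Gin Gout]; apply/prefixP; split=> u w;
  rewrite -[u](permKV s) -[w](permKV t) !(mem_imset _ _ (@perm_inj _ _)) -stE.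
  exact: Gin.
exact: Gout.
Qed.

Lemma prefixI G P1 P2 Q1 Q2 :
  prefix G P1 P2 -> prefix G Q1 Q2 -> prefix G (P1 :&: Q1) (P2 :&: Q2).
Proof.
move=> /prefixP[Pin Pout] /prefixP[Qin Qout]; apply/prefixP.
split=> u w; rewrite !inE => /andP[? ?]; rewrite negb_and => /orP[].
- exact: Pin.
- exact: Qin.
- exact: Pout.
- exact: Qout.
Qed.

Lemma prefix_disjoint G P1 P2 Q1 Q2 u w :
  prefix G P1 P2 -> prefix G Q1 Q2 -> P1 :&: Q1 = set0 -> P2 :&: Q2 = set0 ->
  u \in P1 -> w \in Q2 -> False.
Proof.
move=> /prefixP[Pin _] /prefixP[_ Qout] PQ1 PQ2 uP wQ.
have uQ : u \notin Q1 by apply/negP => uQ; move/setP: PQ1 => /(_ u); rewrite !inE uP uQ.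
have wP : w \notin P2 by apply/negP => wP; move/setP: PQ2 => /(_ w); rewrite !inE wP wQ.
by move: (Qout u w wQ uQ); rewrite Pin.
Qed.

Definition min_prefix G P1 P2 : Prop :=
  [/\ prefix G P1 P2, (P1 != set0) || (P2 != set0) &
      forall Q1 Q2, prefix G Q1 Q2 -> Q1 \subset P1 -> Q2 \subset P2 ->
        (Q1 = set0 /\ Q2 = set0) \/ (Q1 = P1 /\ Q2 = P2)].

Lemma min_prefix_iso G H (s : {perm 'I_m}) (t : {perm 'I_n}) P1 P2 :
  (forall u w, ((u, w) \in G) = ((s u, t w) \in H)) ->
  min_prefix G P1 P2 -> min_prefix H (s @: P1) (t @: P2).
Proof.
move=> stE [Gpre Pne Pmin]; split; first exact: prefix_iso stE Gpre.
  by rewrite !imset_eq0.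
move=> Q1 Q2 HQ sQ1 sQ2.
have GQ := prefix_iso (relabel_inv stE) HQ.
have sQ1' : s^-1 @: Q1 \subset P1 by rewrite -[P1](imset_permK s^-1) invgK imsetS.
have sQ2' : t^-1 @: Q2 \subset P2 by rewrite -[P2](imset_permK t^-1) invgK imsetS.
rewrite -(imset_permK s Q1) -(imset_permK t Q2).
by case: (Pmin _ _ GQ sQ1' sQ2') => -[-> ->]; [left; rewrite !imset0|right].
Qed.

Lemma min_prefix_set0r G P1 a : min_prefix G P1 set0 -> a \in P1 -> P1 = [set a].
Proof.
move=> [/prefixP[Gin _] _ Pmin] aP.
have Ga : prefix G [set a] set0.
  apply/prefixP; split=> u w; last by rewrite in_set0.
  by rewrite inE => /eqP -> _; apply: Gin; rewrite ?in_set0.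
have sa : [set a] \subset P1 by rewrite sub1set.
case: (Pmin _ _ Ga sa (sub0set _)) => -[e _]; last by rewrite e.
by move/setP: e => /(_ a); rewrite !inE eqxx.
Qed.

Lemma min_prefix_set0l G P2 b : min_prefix G set0 P2 -> b \in P2 -> P2 = [set b].
Proof.
move=> [/prefixP[_ Gout] _ Pmin] bP.
have Gb : prefix G set0 [set b].
  apply/prefixP; split=> u w; first by rewrite in_set0.
  by rewrite inE => /eqP -> _; apply: Gout; rewrite ?in_set0.
have sb : [set b] \subset P2 by rewrite sub1set.
case: (Pmin _ _ Gb (sub0set _) sb) => -[_ e]; last by rewrite e.
by move/setP: e => /(_ b); rewrite !inE eqxx.
Qed.

(* Two distinct minimal prefixes are disjoint, hence cannot both meet V1 and
   V2; minimality then forces them to be singletons. *)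
Lemma min_prefix_eq_or_set1 G P1 P2 P1' P2' :
  min_prefix G P1 P2 -> min_prefix G P1' P2' ->
  (P1 = P1' /\ P2 = P2') \/
  (exists a a', [/\ P1 = [set a], P2 = set0, P1' = [set a'] & P2' = set0]) \/
  (exists b b', [/\ P1 = set0, P2 = [set b], P1' = set0 & P2' = [set b']]).
Proof.
move=> Pm P'm; have [Gpre Pne Pmin] := Pm; have [Gpre' P'ne P'min] := P'm.
have GI := prefixI Gpre Gpre'.
have [[e1 e2]|[e1 e2]] := Pmin _ _ GI (subsetIl _ _) (subsetIl _ _); last first.
  have [[f1 f2]|[f1 f2]] := P'min _ _ GI (subsetIr _ _) (subsetIr _ _).
    by move: Pne; rewrite -e1 -e2 f1 f2 !eqxx.
  by left; rewrite -e1 -e2 f1 f2.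
have cross := prefix_disjoint Gpre Gpre' e1 e2.
rewrite setIC [P2 :&: _]setIC in e1 e2.
have cross' := prefix_disjoint Gpre' Gpre e1 e2.
right; have [P1_0|[a aP]] := set_0Vmem P1.
  move: Pne; rewrite P1_0 eqxx /= => /set0Pn[b bP].
  have [P1'_0|[a' aP']] := set_0Vmem P1'; last by case: (cross' _ _ aP' bP).
  move: P'ne; rewrite P1'_0 eqxx /= => /set0Pn[b' bP'].
  right; exists b, b'; split=> //.
    by apply: (@min_prefix_set0l G) bP; rewrite -P1_0.
  by apply: (@min_prefix_set0l G) bP'; rewrite -P1'_0.
have [P2'_0|[b' bP']] := set_0Vmem P2'; last by case: (cross _ _ aP bP').
move: P'ne; rewrite P2'_0 eqxx orbF => /set0Pn[a' aP'].
have [P2_0|[b bP]] := set_0Vmem P2; last by case: (cross' _ _ aP' bP).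
left; exists a, a'; split=> //.
  by apply: (@min_prefix_set0r G) aP; rewrite -P2_0.
by apply: (@min_prefix_set0r G) aP'; rewrite -P2'_0.
Qed.

End Prefixes.

Lemma perm_imset_card (T : finType) (A B : {set T}) :
  #|A| = #|B| -> exists s : {perm T}, s @: A = B.
Proof.
move: {2}#|A :\: B| (leqnn #|A :\: B|) => c; elim: c A => [|c IH] A cAB AB.
  have sAB : A \subset B by rewrite -setD_eq0 -cards_eq0; lia.
  by exists 1%g; rewrite imset_perm1; apply/eqP; rewrite eqEcard sAB AB leqnn.
have [sAB|/subsetPn[a aA aB]] := boolP (A \subset B).
  by exists 1%g; rewrite imset_perm1; apply/eqP; rewrite eqEcard sAB AB leqnn.
have [sBA|/subsetPn[b bB bA]] := boolP (B \subset A).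
  have BA : B = A by apply/eqP; rewrite eqEcard sBA AB leqnn.
  by rewrite BA aA in aB.
pose A' := tperm a b @: A.
have A'B : #|A'| = #|B| by rewrite card_imset //; apply: perm_inj.
have sA' : A' :\: B \subset (A :\: B) :\ a.
  apply/subsetP => x /setDP[/imsetP[y yA ->] xB]; rewrite !inE xB.
  case: tpermP xB => [ya|yb|ya yb] xB.
  - by rewrite bB in xB.
  - by rewrite -yb yA in bA.
  - by rewrite yA !andbT; apply/eqP.
have := subset_leq_card sA'; move: cAB; rewrite (cardsD1 a) !inE aA aB /= => cAB c'.
have [|s' s'A'] := IH A' _ A'B; first lia.
exists (tperm a b * s')%g; rewrite -s'A' /A' -imset_comp.
by apply: eq_imset => x; rewrite permM.
Qed.

Lemma min_prefix_exists m n (G : bigraph m n) :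
  0 < m + n -> exists P1 P2, min_prefix G P1 P2.
Proof.
move=> mn0.
pose size_prefix c := [exists P1 : {set 'I_m}, exists P2 : {set 'I_n},
   [&& prefix G P1 P2, (P1 != set0) || (P2 != set0) & #|P1| + #|P2| == c]].
have ex : exists c, size_prefix c.
  exists (m + n); apply/existsP; exists setT; apply/existsP; exists setT.
  rewrite !cardsT !card_ord eqxx andbT -!card_gt0 !cardsT !card_ord.
  have -> : (0 < m) || (0 < n) by lia.
  by rewrite andbT; apply/prefixP; split=> u w; rewrite !inE.
case: (ex_minnP ex) => c /existsP[P1 /existsP[P2 /and3P[Gpre Pne /eqP Pc]]] cmin.
exists P1, P2; split=> // Q1 Q2 GQ sQ1 sQ2.
have [Qne|] := boolP ((Q1 != set0) || (Q2 != set0)); last first.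
  by rewrite negb_or !negbK => /andP[/eqP -> /eqP ->]; left.
have : c <= #|Q1| + #|Q2|.
  by apply: cmin; apply/existsP; exists Q1; apply/existsP; exists Q2; rewrite GQ Qne eqxx.
have := subset_leq_card sQ1; have := subset_leq_card sQ2 => c2 c1 cQ.
right; split; apply/eqP; rewrite eqEcard ?sQ1 ?sQ2 /=.
  by rewrite -(leq_add2r #|P2|) Pc; apply: leq_trans cQ _; rewrite leq_add2l.
by rewrite -(leq_add2l #|P1|) Pc; apply: leq_trans cQ _; rewrite leq_add2r.
Qed.

Definition indecomposable k l (A : bigraph k l) : bool :=
  (0 < k + l) && [forall Q1 : {set 'I_k}, forall Q2 : {set 'I_l},
     prefix A Q1 Q2 ==> ((Q1 == set0) && (Q2 == set0)) || ((Q1 == setT) && (Q2 == setT))].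

Lemma indecomposableP k l (A : bigraph k l) :
  reflect (0 < k + l /\ forall Q1 Q2, prefix A Q1 Q2 ->
             (Q1 = set0 /\ Q2 = set0) \/ (Q1 = setT /\ Q2 = setT))
          (indecomposable A).
Proof.
apply: (iffP andP) => -[kl0 Amin]; split=> //.
  move=> Q1 Q2 AQ; have /orP[] := implyP (forallP (forallP Amin Q1) Q2) AQ.
    by move=> /andP[/eqP -> /eqP ->]; left.
  by move=> /andP[/eqP -> /eqP ->]; right.
apply/forallP => Q1; apply/forallP => Q2; apply/implyP => AQ.
by case: (Amin _ _ AQ) => -[-> ->]; rewrite !eqxx ?orbT.
Qed.

Lemma widen_ord_inj m k (hk : k <= m) : injective (widen_ord hk).
Proof. by move=> x y /(congr1 val) xy; apply: val_inj. Qed.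

Arguments widen_ord_inj {m k} hk.

Lemma lowsetE m k (hk : k <= m) : lowset m k = widen_ord hk @: setT.
Proof.
apply/setP => u; rewrite inE; apply/idP/imsetP => [uk|[x _ ->]]; last exact: (ltn_ord x).
by exists (Ordinal uk) => //; apply: val_inj.
Qed.

Lemma card_lowset m k : k <= m -> #|lowset m k| = k.
Proof.
by move=> hk; rewrite (lowsetE hk) card_imset ?cardsT ?card_ord //; exact: widen_ord_inj.
Qed.

Lemma lowset_eq0 m k : k <= m -> (lowset m k == set0) = (k == 0).
Proof. by move=> hk; rewrite -cards_eq0 card_lowset. Qed.

Lemma sub_lowset_imset m k (hk : k <= m) (Q : {set 'I_m}) :
  Q \subset lowset m k -> Q = widen_ord hk @: [set x | widen_ord hk x \in Q].
Proof.
move=> /subsetP Qk; apply/setP => u.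
apply/idP/imsetP => [uQ|[x + ->]]; last by rewrite inE.
have uk : u < k by have := Qk u uQ; rewrite inE.
have uE : widen_ord hk (Ordinal uk) = u by apply: val_inj.
by exists (Ordinal uk); rewrite ?inE uE.
Qed.

Arguments sub_lowset_imset {m k} hk {Q}.

Section HeadPrefixes.
Variables (m n k l : nat) (hk : k <= m) (hl : l <= n).
Variables (A : bigraph k l) (R : bigraph (m - k) (n - l)).

Lemma bcat_widen x y : ((widen_ord hk x, widen_ord hl y) \in bcat A R) = ((x, y) \in A).
Proof.
by rewrite -adj_val adj_bcat ?(leq_trans (ltn_ord _)) // /bcat_adj /= !ltn_ord adj_val.
Qed.

Lemma prefix_bcat_widen (Q1 : {set 'I_k}) (Q2 : {set 'I_l}) :
  prefix (bcat A R) (widen_ord hk @: Q1) (widen_ord hl @: Q2) = prefix A Q1 Q2.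
Proof.
have [w1 w2] := (widen_ord_inj hk, widen_ord_inj hl).
have /prefixP[catin catout] := prefix_bcat A R.
apply/prefixP/prefixP => -[Gin Gout]; split=> u w.
- by move=> uQ wQ; rewrite -bcat_widen; apply: Gin; rewrite mem_imset.
- by move=> wQ uQ; rewrite -bcat_widen; apply: Gout; rewrite mem_imset.
- move=> /imsetP[x xQ ->]; have [wl|wl] := ltnP w l; last first.
    by move=> _; apply: catin; rewrite !inE -?leqNgt ?(ltn_ord x).
  have -> : w = widen_ord hl (Ordinal wl) by apply: val_inj.
  by rewrite mem_imset // bcat_widen; apply: Gin.
- move=> /imsetP[y yQ ->]; have [uk|uk] := ltnP u k; last first.
    by move=> _; apply: catout; rewrite !inE -?leqNgt ?(ltn_ord y).
  have -> : u = widen_ord hk (Ordinal uk) by apply: val_inj.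
  by rewrite mem_imset // bcat_widen; apply: Gout.
Qed.

Lemma min_prefix_bcat :
  min_prefix (bcat A R) (lowset m k) (lowset n l) <-> indecomposable A.
Proof.
have [w1 w2] := (widen_ord_inj hk, widen_ord_inj hl).
have kl0 : (0 < k + l) = (lowset m k != set0) || (lowset n l != set0).
  by rewrite !lowset_eq0 //; lia.
split=> [[_ Gne Gmin]|/indecomposableP[Akl Amin]].
  apply/indecomposableP; split=> [|Q1 Q2]; first by rewrite kl0.
  rewrite (lowsetE hk) (lowsetE hl) in Gmin; rewrite -prefix_bcat_widen => GQ.
  have [[/eqP e1 /eqP e2]|[e1 e2]] :=
    Gmin _ _ GQ (imsetS _ (subsetT Q1)) (imsetS _ (subsetT Q2)).
    by left; move: e1 e2; rewrite !imset_eq0 => /eqP -> /eqP ->.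
  by right; rewrite (imset_inj w1 e1) (imset_inj w2 e2).
split; [exact: prefix_bcat|by rewrite -kl0|].
move=> Q1 Q2 GQ /(sub_lowset_imset hk) Q1E /(sub_lowset_imset hl) Q2E.
move: GQ; rewrite {}Q1E {}Q2E prefix_bcat_widen (lowsetE hk) (lowsetE hl).
move=> /Amin[[-> ->]|[-> ->]].
  by left; rewrite !imset0.
by right.
Qed.

End HeadPrefixes.

Definition relabel m n (s : {perm 'I_m}) (t : {perm 'I_n}) (G : bigraph m n) :=
  [set p : 'I_m * 'I_n | ((s^-1)%g p.1, (t^-1)%g p.2) \in G].

Lemma relabelE m n (s : {perm 'I_m}) (t : {perm 'I_n}) (G : bigraph m n) u w :
  ((u, w) \in G) = ((s u, t w) \in relabel s t G).
Proof. by rewrite inE /= !permK. Qed.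

Lemma bcat_decomposition m n (G : bigraph m n) : 0 < m + n ->
  exists k l, [/\ k <= m, l <= n & exists (A : bigraph k l) (R : bigraph (m - k) (n - l)),
    indecomposable A /\ bi_iso G (bcat A R)].
Proof.
move=> mn0; have [P1 [P2 GP]] := min_prefix_exists G mn0.
have hk : #|P1| <= m by apply: leq_trans (max_card _) _; rewrite card_ord.
have hl : #|P2| <= n by apply: leq_trans (max_card _) _; rewrite card_ord.
have [s sP] := @perm_imset_card _ P1 (lowset m #|P1|) (esym (card_lowset hk)).
have [t tP] := @perm_imset_card _ P2 (lowset n #|P2|) (esym (card_lowset hl)).
pose H := relabel s t G.
have HP : min_prefix H (lowset m #|P1|) (lowset n #|P2|).
  by rewrite -sP -tP; apply: min_prefix_iso GP; apply: relabelE.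
have HE : H = bcat (bhead #|P1| #|P2| H) (btail #|P1| #|P2| H).
  by have [Hpre _ _] := HP; apply: bcat_head_tail.
exists #|P1|, #|P2|; split=> //; exists (bhead _ _ H), (btail _ _ H); split.
  by apply/(min_prefix_bcat hk hl _ (btail _ _ H)); rewrite -HE.
by rewrite -HE; apply/bi_isoE; exists s, t; apply: relabelE.
Qed.

Lemma min_prefix_card m n (G : bigraph m n) P1 P2 P1' P2' :
  min_prefix G P1 P2 -> min_prefix G P1' P2' -> #|P1| = #|P1'| /\ #|P2| = #|P2'|.
Proof.
move=> GP GP'; have [[-> ->]|[[a [a' [-> -> -> ->]]]|[b [b' [-> -> -> ->]]]]] :=
  min_prefix_eq_or_set1 GP GP'; by rewrite ?cards1 ?cards0.
Qed.

Lemma bcat_iso_dims m n k l k' l' (A : bigraph k l) (R : bigraph (m - k) (n - l))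
    (A' : bigraph k' l') (R' : bigraph (m - k') (n - l')) :
  k <= m -> l <= n -> k' <= m -> l' <= n -> indecomposable A -> indecomposable A' ->
  bi_iso (bcat A R) (bcat A' R') -> k = k' /\ l = l'.
Proof.
move=> hk hl hk' hl' Aind A'ind /bi_isoE[s [t stE]].
have GP := min_prefix_iso stE (proj2 (min_prefix_bcat hk hl A R) Aind).
have [] := min_prefix_card GP (proj2 (min_prefix_bcat hk' hl' A' R') A'ind).
by rewrite !card_imset ?card_lowset //; apply: perm_inj.
Qed.

Lemma universal_tperm m n (G : bigraph m n) a a' :
  prefix G [set a] set0 -> prefix G [set a'] set0 ->
  forall u w, ((u, w) \in G) = ((tperm a a' u, w) \in G).
Proof.
move=> /prefixP[Ga _] /prefixP[Ga' _] u w.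
have aw : (a, w) \in G by apply: Ga; rewrite ?inE.
have a'w : (a', w) \in G by apply: Ga'; rewrite ?inE.
by case: tpermP => [->|->|//]; rewrite aw a'w.
Qed.

Lemma isolated_tperm m n (G : bigraph m n) b b' :
  prefix G set0 [set b] -> prefix G set0 [set b'] ->
  forall u w, ((u, w) \in G) = ((u, tperm b b' w) \in G).
Proof.
move=> /prefixP[_ Gb] /prefixP[_ Gb'] u w.
have ub : (u, b) \notin G by apply: Gb; rewrite ?inE.
have ub' : (u, b') \notin G by apply: Gb'; rewrite ?inE.
by case: tpermP => [->|->|//]; rewrite (negbTE ub) (negbTE ub').
Qed.

(* When the two first blocks are single vertices of the same colour, the
   isomorphism is corrected by an automorphism swapping them. *)
Lemma bcat_iso_inj m n k l (A A' : bigraph k l) (R R' : bigraph (m - k) (n - l)) :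
  k <= m -> l <= n -> indecomposable A -> indecomposable A' ->
  bi_iso (bcat A R) (bcat A' R') -> bi_iso A A' /\ bi_iso R R'.
Proof.
move=> hk hl Aind A'ind /bi_isoE[s [t stE]].
have GP := min_prefix_iso stE (proj2 (min_prefix_bcat hk hl A R) Aind).
have GP' := proj2 (min_prefix_bcat hk hl A' R') A'ind.
have [[Gpre _ _] [Gpre' _ _]] := (GP, GP').
have [[e1 e2]|[[a [a' [e1 e2 e1' e2']]]|[b [b' [e1 e2 e1' e2']]]]] :=
  min_prefix_eq_or_set1 GP GP'.
- exact: bcat_iso_inv stE e1 e2.
- rewrite e1 e2 in Gpre; rewrite e1' e2' in Gpre'.
  apply: (@bcat_iso_inv _ _ _ _ _ _ _ _ (s * tperm a a')%g t) => //.
  + by move=> u w; rewrite stE (universal_tperm Gpre Gpre') permM.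
  + by rewrite imset_permM e1 imset_set1 tpermL e1'.
  + by rewrite e2 e2'.
- rewrite e1 e2 in Gpre; rewrite e1' e2' in Gpre'.
  apply: (@bcat_iso_inv _ _ _ _ _ _ _ _ s (t * tperm b b')%g) => //.
  + by move=> u w; rewrite stE (isolated_tperm Gpre Gpre') permM.
  + by rewrite e1 e1'.
  + by rewrite imset_permM e2 imset_set1 tpermL e2'.
Qed.

Definition transpose m n (G : bigraph m n) : bigraph n m :=
  [set p : 'I_n * 'I_m | (p.2, p.1) \in G].

Lemma prefix_transpose m n (G : bigraph m n) P1 P2 :
  prefix (transpose G) (~: P2) (~: P1) = prefix G P1 P2.
Proof.
apply/prefixP/prefixP => -[Gin Gout]; split=> u w.
- by move=> uP wP; have := Gin w u; rewrite !inE negbK => ->.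
- by move=> wP uP; have := Gout w u; rewrite !inE negbK => ->.
- by rewrite !inE negbK => wP uP; apply: Gin.
- by rewrite !inE negbK => uP wP; apply: Gout.
Qed.

Lemma indecomposable_transpose k l (A : bigraph k l) :
  indecomposable A -> indecomposable (transpose A).
Proof.
move=> /indecomposableP[kl0 Amin]; apply/indecomposableP; split; first by rewrite addnC.
move=> Q1 Q2; rewrite -[Q1]setCK -[Q2]setCK prefix_transpose => /Amin.
by case=> -[-> ->]; rewrite ?setC0 ?setCT; [right|left].
Qed.

Lemma incomp_nbr2_transpose m n (G : bigraph m n) :
  incomp_rel (nbr2 (transpose G)) =2 incomp_rel (nbr1 G).
Proof.
have NE u : nbr2 (transpose G) u = nbr1 G u by apply/setP => w; rewrite !inE.
by move=> u v; rewrite /incomp_rel !NE.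
Qed.

Lemma connected_relP (T : finType) (r : rel T) c :
  symmetric r -> (forall x, connect r c x) -> connected_rel r.
Proof.
move=> r_sym cx; apply/forallP => a; apply/forallP => b.
by apply: connect_trans (cx b); rewrite (sym_connect_sym r_sym) cx.
Qed.

Lemma incomp_sym (T U : finType) (N : T -> {set U}) : symmetric (incomp_rel N).
Proof. by move=> a b; rewrite /incomp_rel andbC. Qed.

Lemma connect_closed (T : finType) (r : rel T) (S : pred T) a b :
  (forall x y, r x y -> S x -> S y) -> connect r a b -> S a -> S b.
Proof.
move=> rS /connectP[p + ->]; elim: p a => [|c p IH] a //= /andP[ac cp] Sa.
exact: IH cp (rS _ _ ac Sa).
Qed.

(* Comparability with x cannot switch direction along an incomparability path
   from c0, and it starts as N c0 \subset N x by minimality of #|N c0|. *)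
Lemma incomp_component_sub (T U : finType) (N : T -> {set U}) (c0 : T) :
  (forall u, #|N c0| <= #|N u|) ->
  forall x c, ~~ connect (incomp_rel N) c0 x -> connect (incomp_rel N) c0 c ->
  N c \subset N x.
Proof.
move=> c0min x c c0x c0c.
pose S c := connect (incomp_rel N) c0 c && (N c \subset N x).
suff /andP[] : S c by [].
have comp_x y : connect (incomp_rel N) c0 y -> (N y \subset N x) || (N x \subset N y).
  move=> c0y; have : ~~ incomp_rel N y x.
    by apply: contra c0x => /connect1; apply: connect_trans c0y.
  by rewrite /incomp_rel negb_and !negbK.
apply: (connect_closed (S := S)) c0c _; last first.
  rewrite /S connect0; have /orP[//|xc0] := comp_x c0 (connect0 _ _).
  have -> : N c0 = N x by apply/esym/eqP; rewrite eqEcard xc0 c0min.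
  exact: subxx.
move=> y z yz /andP[c0y yx]; have c0z := connect_trans c0y (connect1 yz).
rewrite /S c0z; have /orP[//|xz] := comp_x z c0z.
by case/andP: yz => /negP[]; apply: subset_trans yx xz.
Qed.

Lemma eq_connected_rel (T : finType) (r r' : rel T) :
  r =2 r' -> connected_rel r = connected_rel r'.
Proof.
by move=> rr'; apply: eq_forallb => a; apply: eq_forallb => b; rewrite (eq_connect rr').
Qed.

Section IndecomposableTangle.
Variables (k l : nat) (A : bigraph k l).
Hypothesis Aind : indecomposable A.

Lemma indecomposable_small_prefix Q1 Q2 :
  prefix A Q1 Q2 -> #|Q1| + #|Q2| < k + l -> Q1 = set0 /\ Q2 = set0.
Proof.
have /indecomposableP[_ Amin] := Aind.
by move=> /Amin[//|[-> ->]]; rewrite !cardsT !card_ord ltnn.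
Qed.

Lemma indecomposable_nonneighbour u : 2 <= k + l -> exists w, (u, w) \notin A.
Proof.
move=> kl2; have [w uw|univ] := pickP (fun w => (u, w) \notin A); first by exists w.
have Au : prefix A [set u] set0.
  apply/prefixP; split=> x w; last by rewrite in_set0.
  by rewrite inE => /eqP -> _; apply/negbFE; rewrite univ.
have [|/setP/(_ u)] := indecomposable_small_prefix Au; first by rewrite cards1 cards0.
by rewrite !inE eqxx.
Qed.

Lemma indecomposable_neighbour w : 2 <= k + l -> exists u, (u, w) \in A.
Proof.
move=> kl2; have [u uw|isol] := pickP (fun u => (u, w) \in A); first by exists u.
have Aw : prefix A set0 [set w].
  apply/prefixP; split=> u x; first by rewrite in_set0.
  by rewrite inE => /eqP -> _; rewrite isol.
have [|_ /setP/(_ w)] := indecomposable_small_prefix Aw; first by rewrite cards1 cards0.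
by rewrite !inE eqxx.
Qed.

Lemma indecomposable_ge2 : 2 <= k + l -> 2 <= k.
Proof.
move=> kl2; rewrite leqNgt; apply/negP => k1; have l0 : 0 < l by lia.
have [u _] := indecomposable_neighbour (Ordinal l0) kl2.
have [w uw] := indecomposable_nonneighbour u kl2.
have [u' u'w] := indecomposable_neighbour w kl2.
have u'u : u' = u by apply: ord_inj; have := ltn_ord u; have := ltn_ord u'; lia.
by rewrite -u'u u'w in uw.
Qed.

(* For a component C of the incomparability graph on V2 through a vertex of
   minimal degree, (N(C), C) is a nonempty prefix, hence C = V2. *)
Lemma indecomposable_incomp2 : connected_rel (incomp_rel (nbr2 A)).
Proof.
have /indecomposableP[_ Amin] := Aind; set r := incomp_rel _.
have [a _|empty] := pickP (@predT 'I_l); last by apply/forallP => a; have := empty a.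
have [c0 _ c0min] := @arg_minnP _ a xpredT (fun w => #|nbr2 A w|) isT.
apply: (connected_relP (c := c0) (incomp_sym _)) => x.
pose C := [set w | connect r c0 w].
pose NC := [set u | [exists c in C, (u, c) \in A]].
have ANC : prefix A NC C.
  apply/prefixP; split=> u w; rewrite !inE.
    move=> /existsP[c /andP[cC uc]] wC; rewrite inE in cC.
    have := subsetP (incomp_component_sub (fun u => c0min u isT) wC cC) u.
    by rewrite !inE; apply.
  by move=> wC; apply: contra => uw; apply/existsP; exists w; rewrite inE wC.
have [[_ /setP/(_ c0)]|[_ /setP/(_ x)]] := Amin _ _ ANC; by rewrite !inE ?connect0.
Qed.

End IndecomposableTangle.

Lemma indecomposable_tangle k l (A : bigraph k l) :
  indecomposable A -> 2 <= k + l -> is_tangle A.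
Proof.
move=> Aind kl2; have ATind := indecomposable_transpose Aind.
apply/and4P; split.
- exact: indecomposable_ge2 Aind kl2.
- by apply: indecomposable_ge2 ATind _; rewrite addnC.
- exact: indecomposable_incomp2.
- by rewrite -(eq_connected_rel (incomp_nbr2_transpose A)); apply: indecomposable_incomp2.
Qed.

Lemma ord_other n (w : 'I_n) : 2 <= n -> exists w' : 'I_n, w' != w.
Proof.
move=> n2; have [w0 | w0] := eqVneq (val w) 0.
  by exists (Ordinal n2); apply/eqP => /(congr1 val); rewrite w0.
by exists (Ordinal (ltnW n2)); apply/eqP => e; move: w0; rewrite -e.
Qed.

Lemma connect_step (T : finType) (r : rel T) a b :
  connect r a b -> a != b -> exists c, r a c.
Proof.
move=> /connectP[[|c p] /= acp ->]; first by rewrite eqxx.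
by case/andP: acp => ac _ _; exists c.
Qed.

(* Q1 is closed under V1-incomparability (a vertex of N(y) \ N(x) lies in Q2
   when x \in Q1), so it is empty or all of V1; every vertex of V2, having
   neighbours and non-neighbours, then follows Q1. *)
Lemma tangle_indecomposable k l (A : bigraph k l) : is_tangle A -> indecomposable A.
Proof.
move=> /and4P[k2 l2 conn2 conn1].
apply/indecomposableP; split=> [|Q1 Q2 /prefixP[Ain Aout]]; first lia.
have nbr_both w : (exists u, (u, w) \in A) /\ (exists u, (u, w) \notin A).
  have [w' w'w] := ord_other w l2.
  have [|c /andP[/subsetPn[u wu cu] /subsetPn[u' cu' wu']]] :=
    connect_step (forallP (forallP conn2 w) w'); first by rewrite eq_sym.
  by rewrite !inE in wu wu'; split; [exists u|exists u'].
have [Q1_0|[u0 u0Q]] := set_0Vmem Q1.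
  left; split=> //; apply/setP => w; rewrite in_set0; apply/negbTE/negP => wQ.
  have [[u uw] _] := nbr_both w.
  by move: (Aout u w wQ); rewrite Q1_0 in_set0 uw => /(_ isT).
have Q1T u : u \in Q1.
  apply: (connect_closed (S := mem Q1)) (forallP (forallP conn1 u0) u) u0Q.
  move=> x y /andP[_ /subsetPn[w yw xw]] xQ; rewrite !inE in yw xw.
  have wQ : w \in Q2.
    by apply/negPn/negP => wQ; move: (Ain x w xQ wQ); rewrite (negbTE xw).
  by apply/negPn/negP => yQ; move: (Aout y w wQ yQ); rewrite yw.
right; split; apply/setP => x; rewrite inE ?Q1T //.
have [_ [u ux]] := nbr_both x.
by apply/negPn/negP => xQ; move: (Ain u x (Q1T u) xQ); rewrite (negbTE ux).
Qed.

Lemma indecomposable_iso k l (A A' : bigraph k l) :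
  bi_iso A A' -> indecomposable A -> indecomposable A'.
Proof.
move=> /bi_isoE[s [t stE]] /indecomposableP[kl0 Amin].
apply/indecomposableP; split=> // Q1 Q2 AQ.
rewrite -(imset_permK s Q1) -(imset_permK t Q2).
case: (Amin _ _ (prefix_iso (relabel_inv stE) AQ)) => -[-> ->].
  by left; rewrite !imset0.
by right; rewrite !imset_permT.
Qed.

Definition repr_of m n (c : {set bigraph m n}) : bigraph m n := odflt set0 [pick H in c].

Lemma repr_iso m n (G : bigraph m n) : bi_iso G (repr_of (iso_class G)).
Proof. by rewrite /repr_of; case: pickP => [H|/(_ G)]; rewrite !inE ?bi_iso_refl. Qed.

Definition classes m n : {set {set bigraph m n}} := [set iso_class G | G : bigraph m n].

Definition indec_classes k l : {set {set bigraph k l}} :=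
  [set iso_class G | G : bigraph k l & indecomposable G].

Definition indec_unl k l := #|indec_classes k l|.

Section FirstBlock.
Variables m n k l : nat.
Hypotheses (hk : k <= m) (hl : l <= n).

Definition first_block_classes : {set {set bigraph m n}} :=
  [set c in classes m n | [exists A : bigraph k l, exists R : bigraph (m - k) (n - l),
       indecomposable A && (c == iso_class (bcat A R))]].

Definition bcat_class (p : {set bigraph k l} * {set bigraph (m - k) (n - l)}) :=
  iso_class (bcat (repr_of p.1) (repr_of p.2)).

Lemma first_block_classesE :
  first_block_classes = bcat_class @: setX (indec_classes k l) (classes (m - k) (n - l)).
Proof.
apply/setP => c; apply/idP/imsetP.
  rewrite inE => /andP[_ /existsP[A /existsP[R /andP[Aind /eqP ->]]]].
  exists (iso_class A, iso_class R).
    by apply/setXP; split; apply: imset_f; rewrite ?inE.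
  by apply/iso_classE; apply: bcat_iso => //; apply: repr_iso.
move=> [[a r] /setXP[/imsetP[A Aind ->] /imsetP[R _ ->]] ->]; rewrite inE in Aind.
rewrite inE /bcat_class imset_f //=; apply/existsP; exists (repr_of (iso_class A)).
apply/existsP; exists (repr_of (iso_class R)).
by rewrite eqxx andbT; apply: indecomposable_iso (repr_iso A) Aind.
Qed.

Lemma card_first_block_classes :
  #|first_block_classes| = indec_unl k l * b_unl (m - k) (n - l).
Proof.
rewrite first_block_classesE -cardsX; apply: card_in_imset.
move=> [a r] [a' r'] /setXP[/imsetP[A Aind ->] /imsetP[R _ ->]].
move=> /setXP[/imsetP[A' A'ind ->] /imsetP[R' _ ->]]; rewrite !inE in Aind A'ind.
have rAind := indecomposable_iso (repr_iso A) Aind.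
have rA'ind := indecomposable_iso (repr_iso A') A'ind.
move=> /iso_classE /(bcat_iso_inj hk hl rAind rA'ind) [AA' RR'].
by congr (_, _); apply/iso_classE; apply: bi_iso_trans (repr_iso _) _;
   apply: bi_iso_trans _ (bi_iso_sym (repr_iso _)).
Qed.

End FirstBlock.

Lemma first_block_classes_dims m n k l k' l' c :
  k <= m -> l <= n -> k' <= m -> l' <= n ->
  c \in first_block_classes m n k l -> c \in first_block_classes m n k' l' ->
  k = k' /\ l = l'.
Proof.
move=> hk hl hk' hl'.
rewrite !inE => /andP[_ /existsP[A /existsP[R /andP[Aind /eqP ->]]]].
move=> /andP[_ /existsP[A' /existsP[R' /andP[A'ind /eqP /iso_classE AR]]]].
exact: bcat_iso_dims hk hl hk' hl' Aind A'ind AR.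
Qed.

Lemma sum_mem_card (T : finType) (C F : {set T}) :
  F \subset C -> \sum_(c in C) (c \in F) = #|F|.
Proof.
move=> FC; rewrite -sum1_card big_mkcond [RHS]big_mkcond /=.
apply: eq_bigr => c _; have [cF|] := boolP (c \in F); last by case: (c \in C).
by rewrite (subsetP FC _ cF).
Qed.

Lemma b_unl_rec m n : 0 < m + n ->
  b_unl m n = \sum_(k < m.+1) \sum_(l < n.+1) indec_unl k l * b_unl (m - k) (n - l).
Proof.
move=> mn0.
have one c : c \in classes m n ->
    \sum_(k < m.+1) \sum_(l < n.+1) (c \in first_block_classes m n k l) = 1.
  move=> /imsetP[G _ ->]; rewrite pair_big /=; apply/eqP/sum_nat_eq1.
  have [k [l [hk hl [A [R [Aind GAR]]]]]] := bcat_decomposition G mn0.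
  have GF : iso_class G \in first_block_classes m n k l.
    rewrite inE imset_f //=; apply/existsP; exists A; apply/existsP; exists R.
    by rewrite Aind; apply/eqP/iso_classE.
  exists (Ordinal (hk : k < m.+1), Ordinal (hl : l < n.+1)).
  split=> //=; first by rewrite GF.
  move=> [k' l'] kl' _ /=; apply/eqP; rewrite eqb0; apply/negP => GF'.
  have [kk' ll'] := first_block_classes_dims hk hl (ltn_ord k') (ltn_ord l') GF GF'.
  by case/eqP: kl'; congr (_, _); apply: val_inj.
rewrite /b_unl -/(classes m n) -sum1_card (eq_bigr _ (fun c cC => esym (one c cC))).
rewrite exchange_big; apply: eq_bigr => k _; rewrite exchange_big; apply: eq_bigr => l _.
rewrite -(card_first_block_classes (ltnSE (ltn_ord k)) (ltnSE (ltn_ord l))).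
by apply: sum_mem_card; apply/subsetP => c; rewrite inE => /andP[].
Qed.

Lemma indecomposable_single k l (A : bigraph k l) : k + l = 1 -> indecomposable A.
Proof.
move=> kl1; apply/indecomposableP; split=> [|Q1 Q2 _]; first by rewrite kl1.
have := subset_leq_card (subsetT Q1); have := subset_leq_card (subsetT Q2).
rewrite !cardsT !card_ord => Q2l Q1k.
have [/eqP|[Q1T Q2T]] : #|Q1| + #|Q2| = 0 \/ #|Q1| = k /\ #|Q2| = l by lia.
  by rewrite addn_eq0 !cards_eq0 => /andP[/eqP -> /eqP ->]; left.
by right; split; apply/eqP; rewrite eqEcard subsetT cardsT card_ord ?Q1T ?Q2T leqnn.
Qed.

Lemma card_classes_trivial k l (D : {pred bigraph k l}) :
  (k == 0) || (l == 0) -> set0 \in D -> #|[set iso_class G | G in D]| = 1.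
Proof.
move=> kl0 D0; rewrite (_ : _ @: _ = [set iso_class set0]) ?cards1 //.
have G0 (G : bigraph k l) : G = set0.
  by apply/setP => -[u w]; rewrite in_set0; case/orP: kl0 => /eqP kl0; subst;
     [case: u|case: w].
apply/setP => c; rewrite inE; apply/imsetP/eqP => [[G _ ->]|->]; first by rewrite (G0 G).
by exists set0.
Qed.

Lemma b_unl00 : b_unl 0 0 = 1.
Proof. exact: card_classes_trivial. Qed.

Lemma indec_unl00 : indec_unl 0 0 = 0.
Proof.
rewrite /indec_unl /indec_classes (_ : [set _ | _ in _] = set0) ?cards0 //.
by apply/setP => c; rewrite in_set0; apply/imsetP => -[G]; rewrite inE.
Qed.

Lemma indec_unlE k l :
  indec_unl k l = [&& k == 1 & l == 0] + [&& k == 0 & l == 1] + tau_unl k l.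
Proof.
rewrite /indec_unl /indec_classes /tau_unl; have [kl2|kl1] := leqP 2 (k + l).
  have [-> ->] : [&& k == 1 & l == 0] = false /\ [&& k == 0 & l == 1] = false.
    by split; apply/negP => /andP[/eqP k1 /eqP l1]; move: kl2; rewrite k1 l1.
  have -> : [set iso_class G | G : bigraph k l & indecomposable G] =
            [set iso_class G | G : bigraph k l & is_tangle G]; last by [].
  apply/setP => c; apply/imsetP/imsetP => -[G]; rewrite !inE => GP ->;
    exists G; rewrite ?inE //.
    exact: indecomposable_tangle.
  exact: tangle_indecomposable.
have -> : [set iso_class G | G : bigraph k l & is_tangle G] = set0.
  apply/setP => c; rewrite in_set0.
  apply/imsetP => -[G]; rewrite inE => /and4P[k2 l2 _ _].
  by move: kl1; rewrite ltnNge (leq_trans k2 (leq_addr _ _)).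
rewrite cards0 addn0.
case: k l kl1 => [|[|k]] [|[|l]] // _.
- exact: indec_unl00.
- by apply: card_classes_trivial; rewrite ?inE ?indecomposable_single.
- by apply: card_classes_trivial; rewrite ?inE ?indecomposable_single.
Qed.

Section PowerSeries.
Import GRing.Theory.
Local Open Scope ring_scope.

Lemma fps_mulC (f g : fps2) m n : fps_mul f g m n = fps_mul g f m n.
Proof.
rewrite /fps_mul (reindex_inj rev_ord_inj); apply: eq_bigr => k _.
rewrite (reindex_inj rev_ord_inj); apply: eq_bigr => l _ /=.
by rewrite !subSS !subKn 1?mulrC // -ltnS.
Qed.

Lemma fps_mul1 (g : fps2) m n : fps_mul fps_one g m n = g m n.
Proof.
rewrite /fps_mul big_ord_recl big_ord_recl /= big1 ?addr0; last first.
  by move=> i _; rewrite /fps_one /= mul0r.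
rewrite big1 ?addr0 /fps_one /= ?mul1r ?subn0 //.
by move=> i _; rewrite big1 // => j _; rewrite mul0r.
Qed.

Lemma fps_mulBl (f h g : fps2) m n :
  fps_mul (fps_sub f h) g m n = fps_mul f g m n - fps_mul h g m n.
Proof.
rewrite /fps_mul -sumrB; apply: eq_bigr => k _; rewrite -sumrB.
by apply: eq_bigr => l _; rewrite /fps_sub mulrBl.
Qed.

Lemma fps_mulBr (f h g : fps2) m n :
  fps_mul g (fps_sub f h) m n = fps_mul g f m n - fps_mul g h m n.
Proof. by rewrite fps_mulC fps_mulBl !(fps_mulC g). Qed.

(* By induction on the total degree m + n: the (m, n) coefficient of B D is
   D m n plus terms involving coefficients of D of smaller total degree. *)
Lemma fps_mul_eq0 (B D : fps2) : B 0%N 0%N = 1 ->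
  (forall m n, fps_mul B D m n = 0) -> forall m n, D m n = 0.
Proof.
move=> B00 BD0 m n; elim: (m + n).+1 {-2}m {-2}n (ltnSn (m + n)) => // N IH {}m {}n mnN.
have := BD0 m n; rewrite /fps_mul pair_big (bigD1 (ord0, ord0)) //= B00 !subn0 mul1r.
rewrite big1 ?addr0 // => -[k l] /= kl0; rewrite IH ?mulr0 //.
have : (k != 0 :> nat) || (l != 0 :> nat).
  apply: contraR kl0; rewrite negb_or !negbK => /andP[/eqP k0 /eqP l0].
  by apply/eqP; congr (_, _); apply: val_inj.
by have := ltn_ord k; have := ltn_ord l; lia.
Qed.

Definition I_unl : fps2 := fun m n => Posz (indec_unl m n).

Lemma B_unl_rec m n : B_unl m n = fps_one m n + fps_mul I_unl B_unl m n.
Proof.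
have [mn0|mn] := posnP (m + n).
  have [-> ->] : m = 0%N /\ n = 0%N by lia.
  by rewrite /fps_mul !big_ord1 /B_unl /I_unl b_unl00 indec_unl00 mul0r addr0.
rewrite /fps_one (_ : _ && _ = false) ?add0r; last lia.
rewrite /B_unl b_unl_rec // (big_morph Posz PoszD (erefl _)) /fps_mul.
apply: eq_bigr => k _; rewrite (big_morph Posz PoszD (erefl _)).
by apply: eq_bigr => l _; rewrite PoszM.
Qed.

Lemma B_unl_inv m n : fps_mul B_unl (fps_sub fps_one I_unl) m n = fps_one m n.
Proof. by rewrite fps_mulC fps_mulBl fps_mul1 B_unl_rec; ring. Qed.

Lemma I_unl_tangles m n :
  fps_sub fps_one I_unl m n = fps_sub (fps_sub (fps_sub fps_one fps_x) fps_y) T_unl m n.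
Proof.
rewrite /fps_sub /I_unl indec_unlE /T_unl /fps_x /fps_y.
by case: (m == 1%N); case: (n == 0%N); case: (m == 0%N); case: (n == 1%N);
   rewrite /= ?PoszD; lia.
Qed.

End PowerSeries.

Theorem theorem4p2 :
  (exists C : fps2, fps_eq (fps_mul B_unl C) fps_one) /\
  (forall C : fps2, fps_eq (fps_mul B_unl C) fps_one ->
     fps_eq T_unl (fps_sub (fps_sub (fps_sub fps_one fps_x) fps_y) C)).
Proof.
split; first by exists (fps_sub fps_one I_unl) => m n; apply: B_unl_inv.
move=> C BC m n.
have CE p q : C p q = fps_sub fps_one I_unl p q.
  apply/eqP; rewrite -GRing.subr_eq0; apply/eqP; move: p q.
  apply: (@fps_mul_eq0 B_unl (fps_sub C (fps_sub fps_one I_unl))).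
    by rewrite /B_unl b_unl00.
  by move=> p q; rewrite fps_mulBr BC B_unl_inv GRing.subrr.
by rewrite /fps_sub CE I_unl_tangles /fps_sub; ring.
Qed.
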